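(* Let $E/\mathbb{Q}$ be an elliptic curve with nonzero $j$-invariant and a rational point $P$ of order $3$. If $\widetilde E=E/\langle P\rangle$ has a rational point of order $3$, then there are relatively prime integers $a,b$, both perfect cubes, with $a>0$, such that $E$ and $\widetilde E$ are $\mathbb{Q}$-isomorphic to $E_{C_3}(a,b)$ and $\widetilde E_{C_3}(a,b)$, respectively.
   Context: For integers $a,b$, $E_{C_3}(a,b)$ is the curve $y^2+axy+a^2by=x^3$ over $\mathbb{Q}$ (with the point $(0,0)$ of order $3$), and $\widetilde E_{C_3}(a,b)$ is the curve $y^2+axy+a^2by=x^3-5a^3b\,x-a^4b(a+7b)$, which is a model of $E_{C_3}(a,b)/\langle(0,0)\rangle$. Known fact usable here: every elliptic curve $E/\mathbb{Q}$ with nonzero $j$-invariant and a rational point $P$ of order $3$ is $\mathbb{Q}$-isomorphic to $E_{C_3}(a,b)$ for some relatively prime integers $a>0$, $b$, with $E/\langle P\rangle\cong \widetilde E_{C_3}(a,b)$. *)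

From mathcomp Require Import all_boot all_order all_algebra.
Set Implicit Arguments. Unset Strict Implicit. Unset Printing Implicit Defensive.
Import Order.TTheory GRing.Theory Num.Theory.
Local Open Scope ring_scope.

(* A Weierstrass model y^2 + a1 xy + a3 y = x^3 + a2 x^2 + a4 x + a6 over Q. *)
Record wcurve := WCurve { a1 : rat; a2 : rat; a3 : rat; a4 : rat; a6 : rat }.

Definition b2 (E : wcurve) : rat := a1 E ^+ 2 + 4%:R * a2 E.
Definition b4 (E : wcurve) : rat := 2%:R * a4 E + a1 E * a3 E.
Definition b6 (E : wcurve) : rat := a3 E ^+ 2 + 4%:R * a6 E.
Definition b8 (E : wcurve) : rat :=
  a1 E ^+ 2 * a6 E + 4%:R * a2 E * a6 E - a1 E * a3 E * a4 E
  + a2 E * a3 E ^+ 2 - a4 E ^+ 2.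
Definition c4 (E : wcurve) : rat := b2 E ^+ 2 - 24%:R * b4 E.
Definition disc (E : wcurve) : rat :=
  - b2 E ^+ 2 * b8 E - 8%:R * b4 E ^+ 3 - 27%:R * b6 E ^+ 2
  + 9%:R * b2 E * b4 E * b6 E.
Definition is_elliptic (E : wcurve) : Prop := disc E != 0.
Definition jinv (E : wcurve) : rat := c4 E ^+ 3 / disc E.

(* Rational points: None is the point at infinity O. *)
Definition point := option (rat * rat).
Definition on_curve (E : wcurve) (P : point) : Prop :=
  match P with
  | None => True
  | Some (x, y) =>
      y ^+ 2 + a1 E * x * y + a3 E * y =
      x ^+ 3 + a2 E * x ^+ 2 + a4 E * x + a6 E
  end.

(* Chord-and-tangent group law (Silverman III.2.3). *)
Definition padd (E : wcurve) (P Q : point) : point :=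
  match P, Q with
  | None, _ => Q
  | _, None => P
  | Some (x1, y1), Some (x2, y2) =>
    if (x1 == x2) && (y1 + y2 + a1 E * x2 + a3 E == 0) then None
    else
      let lam := if x1 != x2 then (y2 - y1) / (x2 - x1)
                 else (3%:R * x1 ^+ 2 + 2%:R * a2 E * x1 + a4 E - a1 E * y1)
                      / (2%:R * y1 + a1 E * x1 + a3 E) in
      let nu := if x1 != x2 then (y1 * x2 - y2 * x1) / (x2 - x1)
                else (- x1 ^+ 3 + a4 E * x1 + 2%:R * a6 E - a3 E * y1)
                     / (2%:R * y1 + a1 E * x1 + a3 E) in
      let x3 := lam ^+ 2 + a1 E * lam - a2 E - x1 - x2 in
      Some (x3, - (lam + a1 E) * x3 - nu - a3 E)
  end.

Definition order3 (E : wcurve) (P : point) : Prop :=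
  P <> None /\ padd E P (padd E P P) = None.

(* Q-isomorphism of Weierstrass models: an admissible change of variables
   x = u^2 x' + r, y = u^3 y' + s u^2 x' + t  (Silverman III.3.1, Table 3.1). *)
Definition Qiso (E E' : wcurve) : Prop :=
  exists u r s t : rat, u != 0 /\
    u * a1 E' = a1 E + 2%:R * s /\
    u ^+ 2 * a2 E' = a2 E - s * a1 E + 3%:R * r - s ^+ 2 /\
    u ^+ 3 * a3 E' = a3 E + r * a1 E + 2%:R * t /\
    u ^+ 4 * a4 E' = a4 E - s * a3 E + 2%:R * r * a2 E - (t + r * s) * a1 E
                     + 3%:R * r ^+ 2 - 2%:R * s * t /\
    u ^+ 6 * a6 E' = a6 E + r * a4 E + r ^+ 2 * a2 E + r ^+ 3 - t * a3 E
                     - t ^+ 2 - r * t * a1 E.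

(* Velu's model of the quotient E/<P> for a point P of order 3
   (kernel {O, P, -P}; one representative P of the pair {P, -P}). *)
Definition quot3 (E : wcurve) (P : point) : wcurve :=
  match P with
  | None => E
  | Some (x0, y0) =>
    let gx := 3%:R * x0 ^+ 2 + 2%:R * a2 E * x0 + a4 E - a1 E * y0 in
    let gy := - 2%:R * y0 - a1 E * x0 - a3 E in
    let v := 2%:R * gx - a1 E * gy in
    let w := gy ^+ 2 + x0 * v in
    WCurve (a1 E) (a2 E) (a3 E) (a4 E - 5%:R * v)
           (a6 E - b2 E * v - 7%:R * w)
  end.

Definition EC3 (a b : int) : wcurve :=
  WCurve (a%:~R) 0 ((a ^+ 2 * b)%:~R) 0 0.
Definition EtC3 (a b : int) : wcurve :=
  WCurve (a%:~R) 0 ((a ^+ 2 * b)%:~R) ((- 5%:Z * a ^+ 3 * b)%:~R)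
         ((- (a ^+ 4 * b * (a + 7%:Z * b)))%:~R).

Definition is_cube (n : int) : Prop := exists c : int, n = c ^+ 3.

(* A point P of order 3 is a flex: its tangent meets E only at P.  Translating P to
   (0, 0) and its tangent line to y = 0 puts E in the form y^2 + A xy + C y = x^3,
   with A = a1 + 2 lambda (lambda the tangent slope) and C = psi_2(P); Velu's model
   of E/<P> becomes y^2 + A xy + C y = x^3 - 5 A C x - C (A^3 + 7 C), and c4 = A (A^3 - 24 C)
   shows A <> 0 as j(E) <> 0.  The x-coordinate X of a point of order 3 on the
   quotient is a root of its 3-division polynomial psi_3, and
     (A^3 - 27 C) psi_3(X) = (3 X + A^2) ((9 C + A X)^3 - C (3 X + A^2)^3),
   so C / A^3 is the cube of a rational m / n.  Scaling by u = A / n^3 then yields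
   a = n^3 and b = m^3. *)

From mathcomp Require Import all_boot all_order all_algebra.
From mathcomp Require Import ring.
Set Implicit Arguments. Unset Strict Implicit. Unset Printing Implicit Defensive.
Import Order.TTheory GRing.Theory Num.Theory.
Local Open Scope ring_scope.

(* The model of E in the coordinates x = u^2 x' + r, y = u^3 y' + s u^2 x' + t. *)
Definition wchange (E : wcurve) (u r s t : rat) : wcurve :=
  WCurve ((a1 E + 2%:R * s) / u)
         ((a2 E - s * a1 E + 3%:R * r - s ^+ 2) / u ^+ 2)
         ((a3 E + r * a1 E + 2%:R * t) / u ^+ 3)
         ((a4 E - s * a3 E + 2%:R * r * a2 E - (t + r * s) * a1 E
           + 3%:R * r ^+ 2 - 2%:R * s * t) / u ^+ 4)
         ((a6 E + r * a4 E + r ^+ 2 * a2 E + r ^+ 3 - t * a3 E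
           - t ^+ 2 - r * t * a1 E) / u ^+ 6).

Lemma Qiso_wchange E u r s t : u != 0 -> Qiso E (wchange E u r s t).
Proof.
move=> u_neq0; exists u, r, s, t; rewrite /=.
by split=> //; do ![split]; field; rewrite ?expf_neq0.
Qed.

Lemma c4_wchange E u r s t : u != 0 -> c4 (wchange E u r s t) = c4 E / u ^+ 4.
Proof. by move=> u_neq0; rewrite /c4 /b2 /b4 /=; field. Qed.

Definition psi2 (E : wcurve) (x y : rat) : rat := 2%:R * y + a1 E * x + a3 E.

(* psi2sq E x is psi2 E x y ^+ 2 rewritten with the curve equation. *)
Definition psi2sq (E : wcurve) (x : rat) : rat :=
  4%:R * x ^+ 3 + b2 E * x ^+ 2 + 2%:R * b4 E * x + b6 E.

Definition psi3 (E : wcurve) (x : rat) : rat :=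
  3%:R * x ^+ 4 + b2 E * x ^+ 3 + 3%:R * b4 E * x ^+ 2 + 3%:R * b6 E * x + b8 E.

Lemma psi2sq_wchange E u r s t x : u != 0 ->
  psi2sq (wchange E u r s t) ((x - r) / u ^+ 2) = psi2sq E x / u ^+ 6.
Proof. by move=> u_neq0; rewrite /psi2sq /b2 /b4 /b6 /=; field. Qed.

Lemma psi3_wchange E u r s t x : u != 0 ->
  psi3 (wchange E u r s t) ((x - r) / u ^+ 2) = psi3 E x / u ^+ 8.
Proof. by move=> u_neq0; rewrite /psi3 /b2 /b4 /b6 /b8 /=; field. Qed.

Definition tangent_slope (E : wcurve) (x y : rat) : rat :=
  (3%:R * x ^+ 2 + 2%:R * a2 E * x + a4 E - a1 E * y) / psi2 E x y.

(* The doubling formula gives x(2P) = s^2 + a1 s - a2 - 2x, and 2P = -P forces x(2P) = x. *)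
Lemma order3_inflection E x y : order3 E (Some (x, y)) ->
  let s := tangent_slope E x y in
  psi2 E x y != 0 /\ s ^+ 2 + a1 E * s = a2 E + 3%:R * x.
Proof.
rewrite /order3 /padd /tangent_slope /psi2 => -[_]; rewrite eqxx /=.
rewrite (_ : y + y = 2%:R * y); last by ring.
case: eqP => [_ | /eqP psi2_neq0] //=.
set x2 := _ - x - x; case: eqP => [x2P | _] //= _; split => //.
apply/eqP; rewrite -subr_eq0; apply/eqP.
by transitivity (x2 - x); [rewrite /x2; ring | rewrite -x2P subrr].
Qed.

Lemma order3_division E x y : on_curve E (Some (x, y)) -> order3 E (Some (x, y)) ->
  psi2 E x y != 0 /\ psi2 E x y ^+ 2 = psi2sq E x /\ psi3 E x = 0.
Proof.
move=> /= onE /order3_inflection /= [psi2_neq0 infl].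
have psi2_sq : psi2 E x y ^+ 2 = psi2sq E x.
  apply/eqP; rewrite -subr_eq0; apply/eqP.
  transitivity (4%:R * ((y ^+ 2 + a1 E * x * y + a3 E * y)
                - (x ^+ 3 + a2 E * x ^+ 2 + a4 E * x + a6 E))).
    by rewrite /psi2 /psi2sq /b2 /b4 /b6; ring.
  by rewrite onE subrr mulr0.
do 2?split => //.
set s := tangent_slope E x y in infl.
have a4E : a4 E = s * psi2 E x y - 3%:R * x ^+ 2 - 2%:R * a2 E * x + a1 E * y.
  by rewrite /s /tangent_slope divfK //; ring.
transitivity ((b2 E + 12%:R * x) / 4%:R * (psi2sq E x - psi2 E x y ^+ 2)
              - (s ^+ 2 + a1 E * s - a2 E - 3%:R * x) * psi2 E x y ^+ 2).
  by rewrite /psi3 /psi2sq /b2 /b4 /b6 /b8 a4E /psi2; field.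
by rewrite psi2_sq infl subrr; ring.
Qed.

Definition C3curve (A C : rat) : wcurve := WCurve A 0 C 0 0.

Definition C3quot (A C : rat) : wcurve :=
  WCurve A 0 C (- 5%:R * A * C) (- C * (A ^+ 3 + 7%:R * C)).

Lemma wchange_order3 E x0 y0 u :
  on_curve E (Some (x0, y0)) -> order3 E (Some (x0, y0)) -> u != 0 ->
  let s := tangent_slope E x0 y0 in
  let A := (a1 E + 2%:R * s) / u in let C := psi2 E x0 y0 / u ^+ 3 in
  wchange E u x0 s y0 = C3curve A C /\
  wchange (quot3 E (Some (x0, y0))) u x0 s y0 = C3quot A C.
Proof.
move=> onE /order3_inflection /= [psi2_neq0 infl] u_neq0.
set s := tangent_slope E x0 y0 in infl *.
have a4E : a4 E = s * psi2 E x0 y0 - 3%:R * x0 ^+ 2 - 2%:R * a2 E * x0 + a1 E * y0.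
  by rewrite /s /tangent_slope divfK //; ring.
have gxE : 3%:R * x0 ^+ 2 + 2%:R * a2 E * x0 + a4 E - a1 E * y0 = s * psi2 E x0 y0.
  by rewrite a4E; ring.
rewrite /= gxE; move: onE a4E infl; rewrite /psi2; clearbody s; clear psi2_neq0 gxE.
case: E => e1 e2 e3 e4 e6 /= onE a4E infl.
have e6E : e6 = y0 ^+ 2 + e1 * x0 * y0 + e3 * y0 - x0 ^+ 3 - e2 * x0 ^+ 2 - e4 * x0.
  by rewrite onE; ring.
have e2E : e2 = s ^+ 2 + e1 * s - 3%:R * x0 by rewrite infl; ring.
rewrite e6E a4E e2E /wchange /C3curve /C3quot /b2 /=.
by split; congr WCurve; field.
Qed.

Lemma jinv_neq0_C3curve E u r s t A C :
  jinv E != 0 -> u != 0 -> wchange E u r s t = C3curve A C -> A != 0.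
Proof.
move=> j_neq0 u_neq0 EC; apply: contraNneq j_neq0 => A0.
have : c4 E / u ^+ 4 = 0 by rewrite -(c4_wchange _ r s t) // EC /c4 /b2 /b4 /= A0; ring.
move/eqP; rewrite mulf_eq0 invr_eq0 expf_eq0 (negPf u_neq0) andbF orbF => /eqP c4E.
by rewrite /jinv c4E expr0n mul0r.
Qed.

Lemma C3quot_3torsion_cube A C X D : A != 0 -> D != 0 ->
  D ^+ 2 = psi2sq (C3quot A C) X -> psi3 (C3quot A C) X = 0 ->
  exists q : rat, q ^+ 3 = C / A ^+ 3.
Proof.
move=> A_neq0 D_neq0 psi2_sq psi3_root.
(* At X = -A^2/3 the value psi2sq would be -(A^3 - 27 C)^2 / 27, never a nonzero square. *)
have [X_eq | X_neq] := eqVneq (3%:R * X + A ^+ 2) 0.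
  have XE : X = - A ^+ 2 / 3%:R.
    apply/eqP; rewrite -subr_eq0; apply/eqP.
    by transitivity ((3%:R * X + A ^+ 2) / 3%:R); [field | rewrite X_eq mul0r].
  have : 27%:R * D ^+ 2 + (A ^+ 3 - 27%:R * C) ^+ 2 = 0.
    by rewrite psi2_sq /psi2sq /b2 /b4 /b6 /= XE; field.
  have : 0 < 27%:R * D ^+ 2 + (A ^+ 3 - 27%:R * C) ^+ 2.
    apply: ltr_wpDr; first exact: sqr_ge0.
    by apply: mulr_gt0; [exact: ltr0Sn | rewrite exprn_even_gt0].
  by move/gt_eqF/eqP.
exists ((9%:R * C + A * X) / (A * (3%:R * X + A ^+ 2))).
have cubeE : (9%:R * C + A * X) ^+ 3 = C * (3%:R * X + A ^+ 2) ^+ 3.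
  apply/eqP; rewrite -subr_eq0; apply/eqP; apply: (mulfI X_neq).
  transitivity ((A ^+ 3 - 27%:R * C) * psi3 (C3quot A C) X).
    by rewrite /psi3 /b2 /b4 /b6 /b8 /=; ring.
  by rewrite psi3_root !mulr0.
by rewrite expr_div_n exprMn cubeE; field; rewrite A_neq0 X_neq.
Qed.

Lemma C3_scale_cube (A C : rat) (m n : int) : A != 0 -> n != 0 ->
  (m%:~R / n%:~R) ^+ 3 = C / A ^+ 3 ->
  let u := A / n%:~R ^+ 3 in
  C3curve (A / u) (C / u ^+ 3) = EC3 (n ^+ 3) (m ^+ 3) /\
  C3quot (A / u) (C / u ^+ 3) = EtC3 (n ^+ 3) (m ^+ 3).
Proof.
move=> A_neq0 n_neq0 CE u.
have {}n_neq0 : n%:~R != 0 :> rat by rewrite intr_eq0.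
have aE : A / u = (n ^+ 3)%:~R.
  by rewrite /u rmorphXn /=; field; rewrite n_neq0 A_neq0.
have bE : C / u ^+ 3 = ((n ^+ 3) ^+ 2 * m ^+ 3)%:~R.
  rewrite /u rmorphM !rmorphXn /=.
  have -> : C = A ^+ 3 * (m%:~R / n%:~R) ^+ 3 by rewrite CE mulrC divfK // expf_neq0.
  by field; rewrite n_neq0 A_neq0.
rewrite /EC3 /EtC3 /C3curve /C3quot aE bE !(rmorphM, rmorphN, rmorphD, rmorphXn) /=.
by split=> //; congr WCurve; ring.
Qed.

Theorem proposition4p4 (E : wcurve) (P : point) :
  is_elliptic E -> jinv E != 0 ->
  on_curve E P -> order3 E P ->
  (exists Q : point, on_curve (quot3 E P) Q /\ order3 (quot3 E P) Q) ->
  exists a b : int,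
    coprimez a b /\ 0 < a /\ is_cube a /\ is_cube b /\
    Qiso E (EC3 a b) /\ Qiso (quot3 E P) (EtC3 a b).
Proof.
move=> _ j_neq0 onE P3 [Q [onQ Q3]].
case: P => [[x0 y0]|] in onE P3 onQ Q3 *; last by case: P3.
case: Q => [[xq yq]|] in onQ Q3 *; last by case: Q3.
set s := tangent_slope E x0 y0; set A := a1 E + 2%:R * s; set C := psi2 E x0 y0.
have normal u : u != 0 -> wchange E u x0 s y0 = C3curve (A / u) (C / u ^+ 3) /\
    wchange (quot3 E (Some (x0, y0))) u x0 s y0 = C3quot (A / u) (C / u ^+ 3).
  exact: wchange_order3.
have [E1 quot1] := normal 1 (oner_neq0 _).
rewrite !expr1n !divr1 in E1 quot1.
have A_neq0 := jinv_neq0_C3curve j_neq0 (oner_neq0 _) E1.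
have [q qE] : exists q : rat, q ^+ 3 = C / A ^+ 3.
  have [D_neq0 [psi2_sq psi3_root]] := order3_division onQ Q3.
  have := psi2sq_wchange (quot3 E (Some (x0, y0))) x0 s y0 xq (oner_neq0 _).
  have := psi3_wchange (quot3 E (Some (x0, y0))) x0 s y0 xq (oner_neq0 _).
  rewrite quot1 !expr1n !divr1 psi3_root -psi2_sq => psi3X psi2X.
  exact: C3quot_3torsion_cube A_neq0 D_neq0 (esym psi2X) psi3X.
rewrite -(divq_num_den q) in qE.
have [EC3E EtC3E] := C3_scale_cube A_neq0 (denq_neq0 q) qE.
have u_neq0 : A / (denq q)%:~R ^+ 3 != 0.
  by rewrite mulf_neq0 // invr_eq0 expf_neq0 // intr_eq0 denq_neq0.
exists (denq q ^+ 3), (numq q ^+ 3); do ?split.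
- by apply/coprimezXl/coprimezXr; rewrite coprimezE coprime_sym coprime_num_den.
- by rewrite exprn_gt0 // denq_gt0.
- by exists (denq q).
- by exists (numq q).
- by rewrite -EC3E; have [<- _] := normal _ u_neq0; exact: Qiso_wchange.
- by rewrite -EtC3E; have [_ <-] := normal _ u_neq0; exact: Qiso_wchange.
Qed.
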